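(* Assume the abstract setting of the context. Then there exist $\epsilon_0>0$, $D'>0$ and $\lambda'>0$ such that \[ \|\mathcal L_{\omega,\epsilon}^n h\|_s\le D'e^{-\lambda' n}\|h\|_s \] for all $\epsilon\in I$ with $|\epsilon|\le\epsilon_0$, all $\omega\in\Omega'$, all $n\in\mathbb N$ and all $h\in\mathcal B_s^0$.
   Context: $(\Omega,\mathcal F,\mathbb P)$ is a probability space and $\sigma\colon\Omega\to\Omega$ an invertible, measurable, $\mathbb P$-preserving ergodic map. $(\mathcal B_w,\|\cdot\|_w)$, $(\mathcal B_s,\|\cdot\|_s)$ are Banach spaces with $\mathcal B_s\subset\mathcal B_w$ and $\|h\|_w\le\|h\|_s$ on $\mathcal B_s$. $\psi$ is a nonzero bounded linear functional on $\mathcal B_s$ admitting a bounded extension to $\mathcal B_w$; $\mathcal B_s^0:=\{h\in\mathcal B_s:\psi(h)=0\}$. $I\subset\mathbb R$ is an interval containing $0$; for $\epsilon\in I$, $\omega\in\Omega$, $\mathcal L_{\omega,\epsilon}$ is a bounded linear operator on both $\mathcal B_s$ and $\mathcal B_w$, with $\omega\mapsto\mathcal L_{\omega,\epsilon}h$ measurable for each $h\in\mathcal B_s$ and $\epsilon\in I$. $\mathcal L_\omega:=\mathcal L_{\omega,0}$, $\mathcal L^n_{\omega,\epsilon}:=\mathcal L_{\sigma^{n-1}\omega,\epsilon}\circ\cdots\circ\mathcal L_{\omega,\epsilon}$, $\mathcal L^n_\omega:=\mathcal L^n_{\omega,0}$. There are constants $C,D,\lambda>0$, $\lambda_1\in(0,1)$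 and a measurable $\sigma$-invariant set $\Omega'\subset\Omega$ with $\mathbb P(\Omega')=1$ such that for all $\epsilon\in I$, $\omega\in\Omega'$, $n\in\mathbb N$: (a) $\|\mathcal L_\omega^n h\|_s\le De^{-\lambda n}\|h\|_s$ for $h\in\mathcal B_s^0$; (b) $\|\mathcal L^n_{\omega,\epsilon}h\|_s\le C\lambda_1^n\|h\|_s+C\|h\|_w$ for $h\in\mathcal B_s$; (c) $\|(\mathcal L_{\omega,\epsilon}-\mathcal L_\omega)h\|_w\le C|\epsilon|\,\|h\|_s$ for $h\in\mathcal B_s$; (d) $\|\mathcal L^n_{\omega,\epsilon}\|_{\mathcal B_w\to\mathcal B_w}\le C$; (e) $\psi(\mathcal L_{\omega,\epsilon}h)=\psi(h)$ for $h\in\mathcal B_s$. *)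

From HB Require Import structures.
From mathcomp Require Import all_boot all_order all_algebra.
From mathcomp Require Import all_classical all_reals all_analysis.
Set Implicit Arguments. Unset Strict Implicit. Unset Printing Implicit Defensive.
Import Order.TTheory GRing.Theory Num.Theory.
Import numFieldNormedType.Exports.
Local Open Scope classical_set_scope.
Local Open Scope ring_scope.

Definition bounded_linear (R : realType) (V W : normedModType R) (f : V -> W) :=
  (forall (a : R) (u v : V), f (a *: u + v) = a *: f u + f v) /\
  exists M : R, forall x, `|f x| <= M * `|x|.

Definition borel_measurable (d : measure_display) (T : measurableType d)
  (R : realType) (V : normedModType R) (f : T -> V) :=
  forall U : set V, open U -> measurable (f @^-1` U).

Definition invertible_mpt_ergodic (d : measure_display) (T : measurableType d)
  (R : realType) (P : probability T R) (sigma : T -> T) :=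
  (exists sigma_inv : T -> T,
      cancel sigma sigma_inv /\ cancel sigma_inv sigma /\
      measurable_fun setT sigma /\ measurable_fun setT sigma_inv) /\
  (forall A, measurable A -> P (sigma @^-1` A) = P A) /\
  (forall A, measurable A -> sigma @^-1` A = A -> P A = 0%E \/ P A = 1%E).

Fixpoint cocycle (T V : Type) (sigma : T -> T) (L : T -> V -> V)
  (n : nat) (omega : T) (h : V) : V :=
  match n with
  | 0 => h
  | n'.+1 => L (iter n' sigma omega) (cocycle sigma L n' omega h)
  end.

From HB Require Import structures.
From mathcomp Require Import all_boot all_order all_algebra.
From mathcomp Require Import all_classical all_reals all_analysis.
From mathcomp Require Import ring lra.
Import Order.TTheory GRing.Theory Num.Theory.
Import numFieldNormedType.Exports.
Local Open Scope classical_set_scope.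
Local Open Scope ring_scope.
(* Telescoping L^n_eps - L^n_0 = sum_j L^(n-j-1)_eps (L_eps - L_0) L^j_0 and using (c), (d)
   and the uniform bound on L^j_0 given by (b), the weak norm of L^n_eps h is at most
   (O(n |eps|) + D e^(-lam n)) |h|_s for h in B_s^0.  Applying (b) once more after n steps,
   |L^(2n)_eps h|_s <= C ((2C+1) lam1^n + O(n |eps|) + D e^(-lam n)) |h|_s; taking n large
   and then |eps| small makes L^(2n)_eps a contraction by e^(-1) on B_s^0, which is
   invariant by (e), and iterating gives exponential decay. *)

Set Implicit Arguments.
Unset Strict Implicit.

Lemma bounded_linearB (R : realType) (V W : normedModType R) (f : V -> W) :
  bounded_linear f -> {morph f : u v / u - v}.
Proof.
move=> [f_lin _] u v.
by rewrite -[u - v]addrC -scaleN1r f_lin scaleN1r addrC.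
Qed.

Lemma iter_stable (T : Type) (sigma : T -> T) (Q : set T) n w :
  (forall w, Q w -> Q (sigma w)) -> Q w -> Q (iter n sigma w).
Proof. by move=> sigmaQ Qw; elim: n => //= n; apply: sigmaQ. Qed.

Lemma eventually_mul_expr_le (R : realType) (a q e : R) : `|q| < 1 -> 0 < e ->
  \forall n \near \oo, a * q ^+ n <= e.
Proof.
move=> q_lt1 e_gt0.
have aq0 : (fun n => a * q ^+ n) @ \oo --> 0.
  by rewrite -(mulr0 a); apply: cvgM; [exact: cvg_cst | exact: cvg_expr].
near=> n; apply: le_trans (ler_norm _) _; near: n.
exact: cvgr0_norm_le.
Unshelve. all: end_near.
Qed.

Section Cocycle.
Variables (T V : Type) (sigma : T -> T) (L : T -> V -> V).

Local Notation Ln := (cocycle sigma L).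

Lemma cocycleD n m w h : Ln (n + m) w h = Ln n (iter m sigma w) (Ln m w h).
Proof. by elim: n => //= n ->; rewrite iterD. Qed.

Lemma cocycleS n w h : Ln n.+1 w h = Ln n (sigma w) (L w h).
Proof. by rewrite -addn1 cocycleD. Qed.

Lemma cocycle_stable (Q : set T) (S : set V) n w h :
  (forall w, Q w -> Q (sigma w)) -> (forall w h, Q w -> S h -> S (L w h)) ->
  Q w -> S h -> S (Ln n w h).
Proof.
move=> sigmaQ LS Qw; elim: n => //= n IH Sh.
by apply: LS; [exact: iter_stable | exact: IH].
Qed.

Lemma cocycle_morph (W : Type) (M : T -> W -> W) (f : V -> W) n w h :
  (forall w h, f (L w h) = M w (f h)) -> f (Ln n w h) = cocycle sigma M n w (f h).
Proof. by move=> fL; elim: n => //= n IH; rewrite fL IH. Qed.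

End Cocycle.

Lemma cocycleB (T : Type) (V : zmodType) (sigma : T -> T) (L : T -> V -> V) n w :
  (forall w, {morph L w : x y / x - y}) -> {morph cocycle sigma L n w : x y / x - y}.
Proof. by move=> LB x y; elim: n => //= n ->; rewrite LB. Qed.

Section ExponentialDecay.
Variables (R : realType) (T : Type) (V : normedModType R).
Variables (sigma : T -> T) (L : T -> V -> V) (Q : set T) (S : set V).
Variables (M : R) (N : nat).
Hypotheses (sigmaQ : forall w, Q w -> Q (sigma w))
  (LS : forall w h, Q w -> S h -> S (L w h)).
Hypotheses (M_ge0 : 0 <= M) (N_gt0 : (0 < N)%N).
Hypothesis L_bounded : forall n w h, Q w -> `|cocycle sigma L n w h| <= M * `|h|.
Hypothesis L_contracts : forall w h, Q w -> S h ->
  `|cocycle sigma L N w h| <= expR (-1) * `|h|.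

Lemma cocycle_mulN_le k w h : Q w -> S h ->
  `|cocycle sigma L (k * N) w h| <= expR (- k%:R) * `|h|.
Proof.
move=> Qw Sh; elim: k => [|k IH]; first by rewrite mul0n oppr0 expR0 mul1r.
rewrite mulSn cocycleD.
apply: le_trans (L_contracts (iter_stable _ sigmaQ Qw) (cocycle_stable _ sigmaQ LS Qw Sh)) _.
rewrite -nat1r opprD expRD -mulrA ler_wpM2l //; exact: ltW (expR_gt0 _).
Qed.

Lemma cocycle_exp_decay n w h : Q w -> S h ->
  `|cocycle sigma L n w h| <= M * expR 1 * expR (- N%:R^-1 * n%:R) * `|h|.
Proof.
move=> Qw Sh; set k := (n %/ N)%N.
rewrite {1}(divn_eq n N) addnC cocycleD.
apply: le_trans (L_bounded _ _ (iter_stable _ sigmaQ Qw)) _.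
apply: le_trans (_ : M * (expR (- k%:R) * `|h|) <= _).
  by rewrite ler_wpM2l // cocycle_mulN_le.
rewrite -!mulrA ler_wpM2l // mulrA -expRD ler_wpM2r // ler_expR.
have N_pos : 0 < (N%:R : R) by rewrite ltr0n.
have : N%:R^-1 * n%:R <= k%:R + 1 :> R.
  rewrite mulrC ler_pdivrMr // natr1 -natrM ler_nat.
  exact: ltnW (ltn_ceil _ N_gt0).
lra.
Qed.

End ExponentialDecay.

Section SmallPerturbation.
Variables (R : realType) (T : Type) (sigma : T -> T) (Q : set T).
Variables (Bs Bw : normedModType R) (iota : Bs -> Bw) (psi : Bs -> R).
Variables (I : set R) (Ls : T -> R -> Bs -> Bs) (Lw : T -> R -> Bw -> Bw).
Variables (C D lam lam1 : R).

Local Notation Lsn eps := (cocycle sigma (fun w => Ls w eps)).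
Local Notation Lwn eps := (cocycle sigma (fun w => Lw w eps)).

Hypothesis sigmaQ : forall w, Q w -> Q (sigma w).
Hypotheses (I0 : I 0) (C_gt0 : 0 < C) (lam_gt0 : 0 < lam)
  (lam1_ge0 : 0 <= lam1) (lam1_lt1 : lam1 < 1).
Hypothesis iota_norm : forall h, `|iota h| <= `|h|.
Hypothesis LwB : forall w eps, I eps -> {morph Lw w eps : x y / x - y}.
Hypothesis Ls_iota : forall w eps h, I eps -> iota (Ls w eps h) = Lw w eps (iota h).
Hypothesis Ls0_decay : forall w n h, Q w -> (0 < n)%N -> psi h = 0 ->
  `|Lsn 0 n w h| <= D * expR (- lam * n%:R) * `|h|.
Hypothesis Lasota_Yorke : forall eps w n h, I eps -> Q w -> (0 < n)%N ->
  `|Lsn eps n w h| <= C * lam1 ^+ n * `|h| + C * `|iota h|.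
Hypothesis Lw_close : forall eps w h, I eps -> Q w ->
  `|Lw w eps (iota h) - Lw w 0 (iota h)| <= C * `|eps| * `|h|.
Hypothesis Lwn_bounded : forall eps w n x, I eps -> Q w -> (0 < n)%N ->
  `|Lwn eps n w x| <= C * `|x|.

Lemma Lsn_le eps n w h : I eps -> Q w -> `|Lsn eps n w h| <= (2 * C + 1) * `|h|.
Proof.
move=> Ieps Qw; case: n => [|n]; first by rewrite /= ler_peMl // lerDr mulr_ge0 // ltW.
apply: le_trans (Lasota_Yorke h Ieps Qw (ltn0Sn n)) _.
have lam1_term : C * lam1 ^+ n.+1 * `|h| <= C * `|h|.
  rewrite -mulrA; apply: ler_wpM2l; first exact: ltW.
  by apply: ler_piMl => //; rewrite exprn_ile1 // ltW.
have iota_term : C * `|iota h| <= C * `|h| by rewrite ler_wpM2l // ltW.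
have := normr_ge0 h; lra.
Qed.

Lemma Lwn_le eps n w x : I eps -> Q w -> `|Lwn eps n w x| <= (C + 1) * `|x|.
Proof.
move=> Ieps Qw; case: n => [|n]; first by rewrite /= ler_peMl // lerDr ltW.
apply: le_trans (Lwn_bounded x Ieps Qw (ltn0Sn n)) _.
by rewrite ler_wpM2r // lerDl.
Qed.

Lemma iota_Lsn_sub_le eps n w h : I eps -> Q w ->
  `|iota (Lsn eps n w h) - iota (Lsn 0 n w h)|
    <= C * (C + 1) * `|eps| * \sum_(j < n) `|Lsn 0 j w h|.
Proof.
move=> Ieps; elim: n w h => [|n IH] w h Qw.
  by rewrite /= subrr normr0 big_ord0 mulr0.
have iota_Lsn e m w' h' : I e -> iota (Lsn e m w' h') = Lwn e m w' (iota h').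
  by move=> Ie; apply: cocycle_morph => ? ?; apply: Ls_iota.
rewrite !cocycleS big_ord_recl mulrDr.
set g := Lsn eps n (sigma w) (Ls w 0 h).
rewrite -(subrK (iota g) (iota _)) -addrA.
apply: le_trans (ler_normD _ _) _; apply: lerD.
  rewrite /g !iota_Lsn // -cocycleB; last by move=> w'; exact: LwB.
  apply: le_trans (Lwn_le _ _ Ieps (sigmaQ Qw)) _.
  have -> : C * (C + 1) * `|eps| * `|Lsn 0 0 w h| = (C + 1) * (C * `|eps| * `|h|).
    by rewrite /=; ring.
  rewrite !Ls_iota //; apply: ler_wpM2l; first by rewrite addr_ge0 // ltW.
  exact: Lw_close.
apply: le_trans (IH _ _ (sigmaQ Qw)) _.
apply: ler_wpM2l; first by rewrite !mulr_ge0 ?addr_ge0 // ltW.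
by apply: ler_sum => j _; rewrite cocycleS.
Qed.

Lemma iota_Lsn_le eps n w h : I eps -> Q w -> (0 < n)%N -> psi h = 0 ->
  `|iota (Lsn eps n w h)| <=
    (C * (C + 1) * (2 * C + 1) * n%:R * `|eps| + D * expR (- lam * n%:R)) * `|h|.
Proof.
move=> Ieps Qw n_gt0 psih.
rewrite -(subrK (iota (Lsn 0 n w h)) (iota _)) mulrDl.
apply: le_trans (ler_normD _ _) _; apply: lerD; last first.
  exact: le_trans (iota_norm _) (Ls0_decay Qw n_gt0 psih).
have sum_le : \sum_(j < n) `|Lsn 0 j w h| <= n%:R * ((2 * C + 1) * `|h|).
  rewrite mulr_natl -[X in _ *+ X](card_ord n) -sumr_const.
  by apply: ler_sum => j _; exact: Lsn_le I0 Qw.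
have K_ge0 : 0 <= C * (C + 1) * `|eps| by rewrite !mulr_ge0 ?addr_ge0 // ltW.
have := ler_wpM2l K_ge0 sum_le; have := iota_Lsn_sub_le n h Ieps Qw; lra.
Qed.

Lemma Lsn_double_le eps n w h : I eps -> Q w -> (0 < n)%N -> psi h = 0 ->
  `|Lsn eps (n + n) w h| <= C * ((2 * C + 1) * lam1 ^+ n
     + C * (C + 1) * (2 * C + 1) * n%:R * `|eps| + D * expR (- lam * n%:R)) * `|h|.
Proof.
move=> Ieps Qw n_gt0 psih; rewrite cocycleD.
apply: le_trans (Lasota_Yorke _ Ieps (iter_stable _ sigmaQ Qw) n_gt0) _.
have C_ge0 : 0 <= C by exact: ltW.
have Clam1_ge0 : 0 <= C * lam1 ^+ n by rewrite mulr_ge0 // exprn_ge0.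
have := ler_wpM2l Clam1_ge0 (Lsn_le n h Ieps Qw).
have := ler_wpM2l C_ge0 (iota_Lsn_le Ieps Qw n_gt0 psih).
lra.
Qed.

Lemma Lsn_contraction : exists (N : nat) (eps0 : R), [/\ (0 < N)%N, 0 < eps0 &
  forall eps w h, I eps -> `|eps| <= eps0 -> Q w -> psi h = 0 ->
    `|Lsn eps N w h| <= expR (-1) * `|h|].
Proof.
pose c : R := expR (-1) / 3; have c_gt0 : 0 < c by rewrite divr_gt0 ?expR_gt0.
have [n [n_gt0 lam1_small lam_small]] : exists n, [/\ (0 < n)%N,
    C * (2 * C + 1) * lam1 ^+ n <= c & C * D * expR (- lam * n%:R) <= c].
  have lam1_norm : `|lam1| < 1 by rewrite ger0_norm.
  have expR_norm : `|expR (- lam)| < 1 by rewrite gtr0_norm ?expR_gt0 // expR_lt1 oppr_lt0.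
  have [n [/= n_gt0 [lam1_le lam_le]]] := filter_ex (filterI (nbhs_infty_gt 0%N)
    (filterI (eventually_mul_expr_le (C * (2 * C + 1)) lam1_norm c_gt0)
             (eventually_mul_expr_le (C * D) expR_norm c_gt0))).
  by exists n; rewrite expRM_natr.
pose K := C * (C + 1) * (2 * C + 1) * n%:R.
have K_gt0 : 0 < K by rewrite /K !mulr_gt0 ?addr_gt0 ?mulr_gt0 ?ltr0n.
exists (n + n)%N, (c / (C * K)); split; first by rewrite addn_gt0 n_gt0.
  exact: divr_gt0 c_gt0 (mulr_gt0 C_gt0 K_gt0).
move=> eps w h Ieps eps_le Qw psih.
apply: le_trans (Lsn_double_le Ieps Qw n_gt0 psih) _; apply: ler_wpM2r => //.
have : C * K * `|eps| <= c by rewrite mulrC -ler_pdivlMr // mulr_gt0.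
move: lam1_small lam_small; rewrite /c /K; lra.
Qed.

End SmallPerturbation.

Theorem proposition3p2
  (R : realType) (d : measure_display) (Omega : measurableType d)
  (P : probability Omega R) (sigma : Omega -> Omega)
  (Hsigma : invertible_mpt_ergodic P sigma)
  (Bw Bs : completeNormedModType R)
  (iota : Bs -> Bw) (* the inclusion B_s ⊂ B_w *)
  (Hiota_lin : bounded_linear iota) (Hiota_inj : injective iota)
  (Hiota_norm : forall h : Bs, `|iota h| <= `|h|)
  (psi : Bs -> R) (psiw : Bw -> R)
  (Hpsi : bounded_linear (psi : Bs -> R^o)) (Hpsi_nz : exists h, psi h != 0)
  (Hpsiw : bounded_linear (psiw : Bw -> R^o))
  (Hpsi_ext : forall h, psiw (iota h) = psi h)
  (I : set R) (HI : is_interval I) (HI0 : I 0)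
  (Ls : Omega -> R -> Bs -> Bs) (Lw : Omega -> R -> Bw -> Bw)
  (HLs : forall omega eps, I eps -> bounded_linear (Ls omega eps))
  (HLw : forall omega eps, I eps -> bounded_linear (Lw omega eps))
  (HLcompat : forall omega eps h, I eps -> iota (Ls omega eps h) = Lw omega eps (iota h))
  (HLmeas : forall eps h, I eps -> borel_measurable (fun omega => Ls omega eps h))
  (C D lam lam1 : R) (HC : 0 < C) (HD : 0 < D) (Hlam : 0 < lam)
  (Hlam1 : 0 < lam1 < 1)
  (Omega' : set Omega) (HO'm : measurable Omega')
  (HO'inv : sigma @^-1` Omega' = Omega') (HO'P : P Omega' = 1%E)
  (Ha : forall omega n h, Omega' omega -> (0 < n)%N -> psi h = 0 ->
      `|cocycle sigma (fun w => Ls w 0) n omega h| <= D * expR (- lam * n%:R) * `|h|)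
  (Hb : forall eps omega n h, I eps -> Omega' omega -> (0 < n)%N ->
      `|cocycle sigma (fun w => Ls w eps) n omega h|
        <= C * lam1 ^+ n * `|h| + C * `|iota h|)
  (Hc : forall eps omega h, I eps -> Omega' omega ->
      `|Lw omega eps (iota h) - Lw omega 0 (iota h)| <= C * `|eps| * `|h|)
  (Hd : forall eps omega n h, I eps -> Omega' omega -> (0 < n)%N ->
      `|cocycle sigma (fun w => Lw w eps) n omega h| <= C * `|h|)
  (He : forall eps omega h, I eps -> Omega' omega -> psi (Ls omega eps h) = psi h) :
  exists eps0 D' lam' : R, [/\ 0 < eps0, 0 < D', 0 < lam' &
    forall eps omega n h, I eps -> `|eps| <= eps0 -> Omega' omega -> psi h = 0 ->
      `|cocycle sigma (fun w => Ls w eps) n omega h| <= D' * expR (- lam' * n%:R) * `|h|].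
Proof.
have sigmaO' w : Omega' w -> Omega' (sigma w) by rewrite -{1}HO'inv.
have /andP[lam1_gt0 lam1_lt1] := Hlam1.
have LwB w eps : I eps -> {morph Lw w eps : x y / x - y}.
  by move=> Ieps; apply: bounded_linearB; exact: HLw.
have Lsn_bounded := Lsn_le HC (ltW lam1_gt0) lam1_lt1 Hiota_norm Hb.
have [N [eps0 [N_gt0 eps0_gt0 contraction]]] := Lsn_contraction sigmaO' HI0 HC Hlam
  (ltW lam1_gt0) lam1_lt1 Hiota_norm LwB HLcompat Ha Hb Hc Hd.
exists eps0, ((2 * C + 1) * expR 1), N%:R^-1; split => //.
- by rewrite mulr_gt0 ?expR_gt0 // addr_gt0 // mulr_gt0.
- by rewrite invr_gt0 ltr0n.
move=> eps w n h Ieps eps_le Ow psih.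
apply: (cocycle_exp_decay (S := fun h => psi h = 0) sigmaO') => //.
- by move=> w' h' Ow' psih' /=; rewrite He.
- by rewrite addr_ge0 ?mulr_ge0 // ltW.
- by move=> m w' h' Ow'; apply: Lsn_bounded.
- by move=> w' h' Ow' psih'; apply: contraction.
Qed.
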